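(* Let $\Gamma=(V,E)$ be a finite connected planar quiver, $k$ a field of characteristic $0$, and $I\subseteq R^2$ a two-sided ideal of $k\Gamma$. Then (a) $\dim_k\mathfrak{D}_V=|V|-1$; (b) $\dim_k\mathfrak{D}_{\mathbb{P}}=|F|-1$; (c) $\mathfrak{D}_V$ and $\mathfrak{D}_{\mathbb{P}}$ are subspaces of $\mathfrak{D}_E$ with $\mathfrak{D}_V\cap\mathfrak{D}_{\mathbb{P}}=0$.
   Context: For a path $p$, $t(p),h(p)$ are its start and end vertex; paths multiply by left-to-right concatenation (product $0$ if they do not concatenate). $R$ is the ideal generated by $E$, $\overline{x}=x+I$. A differential operator from $k\Gamma$ to $k\Gamma/I$ is a $k$-linear map with $D(xy)=D(x)\overline{y}+\overline{x}D(y)$. For $p\in E$, $D_{p,\overline{p}}$ is the unique differential operator $k\Gamma\to k\Gamma/I$ with $D_{p,\overline{p}}(p)=\overline{p}$ and vanishing on all other arrows and all vertices; $\mathfrak{D}_E$ is the span of $\{D_{p,\overline{p}}\mid p\in E\}$. For $v\in V$, $D_{\overline{v}}$ is $x\mapsto\overline{v}\,\overline{x}-\overline{x}\,\overline{v}$, and $\mathfrak{D}_V$ is the span of $\{D_{\overline{v}}\mid v\in V\}$. A planar quiver is a quiver with a fixed embedding into $\mathbb{R}^2$; its set $F$ of faces is the set of connected components of $\mathbb{R}^2\setminus\Gamma$. For a face $f$ whose boundary (primitive cycle) consists of the ordered list of arrows $p_1,\dots,p_s$ (an arrow bordering $f$ on both sides appears twice), the face differential operator is $D_{\mathbbm{p}_f}=\sum_{i=1}^s\epsilon_iD_{p_i,\overline{p_i}}$,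 where $\epsilon_i=+1$ if $p_i$ runs clockwise when viewed from the interior of $f$ and $\epsilon_i=-1$ otherwise. $\mathfrak{D}_{\mathbb{P}}$ is the span of $\{D_{\mathbbm{p}_f}\mid f\in F\}$. *)

From HB Require Import structures.
From mathcomp Require Import all_boot all_order all_algebra all_fingroup.
Set Implicit Arguments. Unset Strict Implicit. Unset Printing Implicit Defensive.
Import Order.TTheory GRing.Theory.
Local Open Scope ring_scope.

Section Quiver.
Variables (V E : finType) (t h : E -> V).

(* A path: either the trivial path at a vertex (inl v) or a non-empty
   sequence of arrows [e1; ...; en] with h e_i = t e_(i+1). *)
Definition qpath := (V + seq E)%type.

Definition valid_path (p : qpath) : bool :=
  match p with
  | inl _ => true
  | inr [::] => false
  | inr (e :: s) => path (fun a b => h a == t b) e s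
  end.

Definition triv_path (v : V) : qpath := inl v.
Definition arrow_path (e : E) : qpath := inr [:: e].

(* left-to-right concatenation; None means the product is 0 *)
Definition pcat (p q : qpath) : option qpath :=
  match p, q with
  | inl v, inl w => if v == w then Some p else None
  | inl v, inr (e :: _) => if v == t e then Some q else None
  | inr (e :: s), inl w => if h (last e s) == w then Some p else None
  | inr (e :: s), inr (e' :: s') =>
      if h (last e s) == t e' then Some (inr ((e :: s) ++ (e' :: s'))) else None
  | _, _ => None
  end.

Definition qadj : rel V :=
  fun u v => [exists e, ((t e == u) && (h e == v)) || ((t e == v) && (h e == u))].
Definition qconnected : Prop := (0 < #|V|)%N /\ forall u v, connect qadj u v.

(* darts: (e, true) = end of e at its tail, (e, false) = end at its head *)
Definition dart := (E * bool)%type.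
Definition dvert (d : dart) : V := if d.2 then t d.1 else h d.1.
Definition dflip (d : dart) : dart := (d.1, ~~ d.2).

(* sigma: the cyclic (say counter-clockwise) order of darts around each
   vertex.  face permutation: traverse the dart, then rotate. *)
Definition face_perm (sigma : {perm dart}) (d : dart) : dart := sigma (dflip d).

(* faces = orbits of face_perm, represented by their roots; when there
   are no arrows the plane minus the graph has exactly one face *)
Definition face_roots (sigma : {perm dart}) : seq dart :=
  enum (froots (face_perm sigma)).
Definition nfaces (sigma : {perm dart}) : nat :=
  if #|E| == 0%N then 1%N else size (face_roots sigma).

Definition planar_rotation (sigma : {perm dart}) : Prop :=
  [/\ forall d, dvert (sigma d) = dvert d,
      forall d d', dvert d = dvert d' -> fconnect sigma d d'
    & (#|V| + nfaces sigma = #|E| + 2)%N ].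

(* orientation sign of a dart along its face boundary traversal *)
Definition dsign (k : pzRingType) (d : dart) : k := if d.2 then 1 else -1.

Variable k : fieldType.

(* A is (a copy of) the path algebra k Gamma, with basis iota (paths) *)
Definition is_path_algebra (A : algType k) (iota : qpath -> A) : Prop :=
  [/\ (forall s : seq (qpath * k), uniq (map fst s) -> all valid_path (map fst s) ->
         \sum_(u <- s) u.2 *: iota u.1 = 0 -> all (fun u => u.2 == 0) s),
      (forall x : A, exists2 s : seq (qpath * k), all valid_path (map fst s) &
         x = \sum_(u <- s) u.2 *: iota u.1)
    & (forall p q, valid_path p -> valid_path q ->
         iota p * iota q = if pcat p q is Some r then iota r else 0) ].

Section Alg.
Variables (A : algType k) (iota : qpath -> A).

(* R = two-sided ideal generated by the arrows; R^2 = its square *)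
Definition inR (x : A) : Prop :=
  exists s : seq (A * E * A), x = \sum_(u <- s) u.1.1 * iota (arrow_path u.1.2) * u.2.
Definition inR2 (x : A) : Prop :=
  exists s : seq (A * A), (forall u, u \in s -> inR u.1 /\ inR u.2) /\
    x = \sum_(u <- s) u.1 * u.2.

Variables (B : algType k) (pi : A -> B).

(* pi : A -> B is (a copy of) the quotient map A -> A/I with I = ker pi *)
Definition is_quotient_map : Prop :=
  [/\ forall (a : k) x y, pi (a *: x + y) = a *: pi x + pi y,
      forall x y, pi (x * y) = pi x * pi y,
      pi 1 = 1
    & forall b, exists x, pi x = b].

Definition differential_operator (D : A -> B) : Prop :=
  (forall (a : k) x y, D (a *: x + y) = a *: D x + D y) /\
  (forall x y, D (x * y) = D x * pi y + pi x * D y).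

Definition is_Dp (D : E -> A -> B) : Prop :=
  forall p, differential_operator (D p) /\
    D p (iota (arrow_path p)) = pi (iota (arrow_path p)) /\
    (forall q, q != p -> D p (iota (arrow_path q)) = 0) /\
    (forall v, D p (iota (triv_path v)) = 0).

Definition Dvert (v : V) (x : A) : B :=
  pi (iota (triv_path v)) * pi x - pi x * pi (iota (triv_path v)).

Definition Dface (D : E -> A -> B) (sigma : {perm dart}) (r : dart) (x : A) : B :=
  \sum_(d <- fingraph.orbit (face_perm sigma) r) dsign k d *: D d.1 x.

Definition DV_family : seq (A -> B) := [seq Dvert v | v <- enum V].
Definition DE_family (D : E -> A -> B) : seq (A -> B) := [seq D p | p <- enum E].
Definition DP_family (D : E -> A -> B) (sigma : {perm dart}) : seq (A -> B) :=
  if #|E| == 0%N then [:: fun _ => 0] else [seq Dface D sigma r | r <- face_roots sigma].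

End Alg.
End Quiver.

Section Span.
Variables (k : fieldType) (X : Type) (M : lmodType k).

Definition fam_nth (fs : seq (X -> M)) (i : nat) : X -> M := nth (fun _ => 0) fs i.

Definition lin_indep (fs : seq (X -> M)) : Prop :=
  forall c : nat -> k,
    (forall x, \sum_(i < size fs) c i *: fam_nth fs i x = 0) ->
    forall i, (i < size fs)%N -> c i = 0.

Definition in_span (fs : seq (X -> M)) (g : X -> M) : Prop :=
  exists c : nat -> k, forall x, g x = \sum_(i < size fs) c i *: fam_nth fs i x.

(* dim_k span(fs) = d : d is the maximal size of a linearly independent
   subfamily of fs *)
Definition span_dim (fs : seq (X -> M)) (d : nat) : Prop :=
  (exists m : bitseq, lin_indep (mask m fs) /\ size (mask m fs) = d) /\
  (forall m : bitseq, lin_indep (mask m fs) -> (size (mask m fs) <= d)%N).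

Definition span_sub (fs gs : seq (X -> M)) : Prop :=
  forall i, (i < size fs)%N -> in_span gs (fam_nth fs i).

Definition span_meet_trivial (fs gs : seq (X -> M)) : Prop :=
  forall g, in_span fs g -> in_span gs g -> forall x, g x = 0.
End Span.

From HB Require Import structures.
From mathcomp Require Import all_boot all_order all_algebra all_fingroup.
Set Implicit Arguments. Unset Strict Implicit. Unset Printing Implicit Defensive.
Import Order.TTheory GRing.Theory Num.Theory.
Local Open Scope ring_scope.

(* Every operator of D_V and of D_P is a combination of the arrow operators
   D_e: the coefficient of D_e is [t e = v] - [h e = v] in D_v, and
   b(f_t) - b(f_h) in sum_f b_f D_f, where f_t and f_h are the faces of the
   two darts of e.  The D_e are linearly independent because no arrow lies in
   R^2, which contains I.  So a relation among the D_v is a function on the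
   vertices that is constant along arrows, and a relation among the D_f is a
   function on the faces that is constant across arrows; both are constant by
   connectivity, which gives the dimensions |V| - 1 and |F| - 1.
   If sum_v a_v D_v = sum_f b_f D_f, then b(f_t) - b(f_h) = a(t e) - a(h e) for
   every arrow, and summing around the boundary of each face shows that b is
   harmonic on the (connected) dual graph.  Grounding one vertex makes the
   Laplacian injective over Q by the maximum principle, so its integer
   determinant is nonzero and, in characteristic 0, b is constant: both sides
   of the relation vanish. *)

Lemma intr_eq0_pchar0 (K : fieldType) (z : int) :
  [pchar K] =i pred0 -> (z%:~R == 0 :> K) = (z == 0).
Proof.
move=> /pcharf0P charK; case: z => m; first exact: charK.
by rewrite NegzE rmorphN oppr_eq0 /= -[X in X == 0]/(m.+1%:R) charK.
Qed.

Section Laplacian.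
Variables (n : nat) (w : 'I_n -> 'I_n -> nat).
Hypothesis w_sym : forall i j, w i j = w j i.
Hypothesis w_connected : forall P : pred 'I_n, (exists i, P i) ->
  (forall i j, (0 < w i j)%N -> P i -> P j) -> forall i, P i.

Definition laplacian (K : pzRingType) (u : 'I_n -> K) j :=
  \sum_i (w i j)%:R * (u j - u i).

Lemma sum_laplacian (K : pzRingType) (u : 'I_n -> K) : \sum_j laplacian u j = 0.
Proof.
under eq_bigr => j _ do rewrite /laplacian (eq_bigr _ (fun i _ => mulrBr _ _ _)) sumrB.
rewrite sumrB exchange_big /=; apply/eqP; rewrite subr_eq0; apply/eqP.
by apply: eq_bigr => j _; apply: eq_bigr => i _; rewrite w_sym.
Qed.

Lemma laplacian_eq0_const_rat (u : 'I_n -> rat) :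
  (forall j, laplacian u j = 0) -> forall i j, u i = u j.
Proof.
move=> harm_u i0 j.
have [m _ max_m] : extremum_spec >=%O predT u [arg max_(i > i0) u i]%O.
  exact: arg_maxP.
suff u_max l : u l = u m by rewrite !u_max.
apply/eqP; move: l; apply: w_connected; first by exists m.
move=> i l w_il /eqP ui.
have /eqP : (w l i)%:R * (u i - u l) = 0.
  apply: (psumr_eq0P _ (harm_u i)) => // l' _.
  by rewrite mulr_ge0 ?ler0n // ui subr_ge0; apply: max_m.
by rewrite w_sym mulf_eq0 pnatr_eq0 eqn0Ngt w_il /= subr_eq0 ui eq_sym.
Qed.

Section Grounded.
Variable i0 : 'I_n.

Definition grounded_laplacian (K : pzRingType) : 'M[K]_n :=
  \matrix_(i, j) ((i == j)%:R * (\sum_l w i l)%:R - (w i j)%:R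
                  + ((i == i0) && (j == i0))%:R).

Lemma grounded_laplacian_row (K : comPzRingType) (u : 'rV[K]_n) j :
  (u *m grounded_laplacian K) 0 j = laplacian (u 0) j + (j == i0)%:R * u 0 j.
Proof.
rewrite !mxE /laplacian.
under eq_bigr => i _ do rewrite mxE mulrDr mulrBr.
rewrite big_split sumrB /=.
have -> : \sum_i u 0 i * ((i == j)%:R * (\sum_l w i l)%:R) =
          u 0 j * (\sum_l w j l)%:R.
  rewrite (bigD1 j) //= eqxx mul1r [X in _ + X]big1 ?addr0 // => i /negbTE ->.
  by rewrite mul0r mulr0.
have -> : \sum_i u 0 i * ((i == i0) && (j == i0))%:R = (j == i0)%:R * u 0 j.
  rewrite (bigD1 j) //= andbb mulrC [X in _ + X]big1 ?addr0 // => i ij.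
  case: (i =P i0) => [ii0|]; last by rewrite mulr0.
  by rewrite ii0 eq_sym in ij; rewrite (negbTE ij) mulr0.
congr (_ + _); under [RHS]eq_bigr => i _ do rewrite mulrBr.
rewrite sumrB -mulr_suml natr_sum mulrC; congr (_ * _ - _).
  by apply: eq_bigr => l _; rewrite w_sym.
by apply: eq_bigr => i _; rewrite mulrC.
Qed.

Lemma grounded_laplacian_rat_inj (u : 'rV[rat]_n) :
  u *m grounded_laplacian rat = 0 -> u = 0.
Proof.
move=> u0; have row_eq0 j : laplacian (u 0) j + (j == i0)%:R * u 0 j = 0.
  by rewrite -grounded_laplacian_row u0 mxE.
have ui0 : u 0 i0 = 0.
  have : \sum_j (laplacian (u 0) j + (j == i0)%:R * u 0 j) = 0 by rewrite big1.
  rewrite big_split /= sum_laplacian add0r (bigD1 i0) //= eqxx mul1r big1 ?addr0 // => j.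
  by move/negbTE ->; rewrite mul0r.
have harm_u j : laplacian (u 0) j = 0.
  by have := row_eq0 j; case: eqP => [->|_]; rewrite ?ui0 ?mulr0 ?mul0r addr0.
by apply/rowP => j; rewrite mxE (laplacian_eq0_const_rat harm_u j i0) ui0.
Qed.

Lemma map_grounded_laplacian (K : pzRingType) :
  map_mx intr (grounded_laplacian int) = grounded_laplacian K.
Proof.
by apply/matrixP => i j; rewrite !mxE rmorphD rmorphB rmorphM !rmorph_nat.
Qed.

Lemma det_grounded_laplacian_neq0 : \det (grounded_laplacian int) != 0.
Proof.
have : grounded_laplacian rat \in unitmx.
  rewrite -row_free_unit -kermx_eq0; apply/eqP/row_matrixP => i.
  by rewrite row0; apply: grounded_laplacian_rat_inj; rewrite -row_mul mulmx_ker row0.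
rewrite -map_grounded_laplacian unitmxE unitfE det_map_mx; apply: contra => /eqP ->.
by rewrite rmorph0.
Qed.
End Grounded.

Lemma laplacian_eq0_const (K : fieldType) : [pchar K] =i pred0 ->
  forall u : 'I_n -> K, (forall j, laplacian u j = 0) -> forall i j, u i = u j.
Proof.
move=> charK u harm_u i j; pose v : 'rV[K]_n := \row_l (u l - u i).
have L_unit : grounded_laplacian i K \in unitmx.
  rewrite unitmxE unitfE -map_grounded_laplacian det_map_mx.
  by rewrite intr_eq0_pchar0 // det_grounded_laplacian_neq0.
have vL : v *m grounded_laplacian i K = 0.
  apply/rowP => l; rewrite grounded_laplacian_row mxE.
  have -> : laplacian (v 0) l = laplacian u l.
    by apply: eq_bigr => i' _; rewrite !mxE opprB addrA subrK.
  by rewrite harm_u add0r mxE; case: eqP => [->|_]; rewrite ?subrr ?mulr0 ?mul0r.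
have /rowP /(_ j) : v = 0 by rewrite -(mulmxK L_unit v) vL mul0mx.
by rewrite !mxE => /eqP; rewrite subr_eq0 => /eqP.
Qed.
End Laplacian.

Section PathAlgebra.
Variables (V E : finType) (t h : E -> V) (k : fieldType).
Variables (A : algType k) (iota : qpath V E -> A).
Hypothesis iota_basis : is_path_algebra t h iota.

Local Notation valid := (valid_path t h).

Definition path_length (p : qpath V E) : nat :=
  if p is inr s then size s else 0%N.

Definition path_comb (s : seq (qpath V E * k)) : A := \sum_(u <- s) u.2 *: iota u.1.

Definition long_paths_comb (n : nat) (x : A) : Prop :=
  exists2 s, all valid (map fst s) & all (fun u => n <= path_length u.1)%N s /\ x = path_comb s.

Lemma pcat_valid p q r : valid p -> valid q -> pcat t h p q = Some r ->
  valid r /\ path_length r = (path_length p + path_length q)%N.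
Proof.
case: p => [v|[|e s]] //; case: q => [w|[|e' s']] //=.
- by move=> _ _; case: eqP => // _ [<-].
- by move=> _ vq; case: eqP => // _ [<-].
- by move=> vp _; case: eqP => // _ [<-]; rewrite addn0.
move=> vp vq; case: eqP => // pq [<-] /=; split; last by rewrite size_cat.
by rewrite cat_path vp /= pq eqxx.
Qed.

Lemma long_paths_comb_any x : long_paths_comb 0 x.
Proof.
by case: iota_basis => _ /(_ x) [s vs ->] _; exists s => //; split => //; apply/allP.
Qed.

Lemma long_paths_comb0 n : long_paths_comb n 0.
Proof. by exists [::] => //; rewrite /path_comb big_nil. Qed.

Lemma long_paths_combD n x y :
  long_paths_comb n x -> long_paths_comb n y -> long_paths_comb n (x + y).
Proof.
move=> [s vs [ls ->]] [s' vs' [ls' ->]]; exists (s ++ s').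
  by rewrite map_cat all_cat vs vs'.
by rewrite all_cat ls ls' /path_comb big_cat.
Qed.

Lemma long_paths_comb_sum n (I : eqType) (r : seq I) (F : I -> A) :
  (forall i, i \in r -> long_paths_comb n (F i)) ->
  long_paths_comb n (\sum_(i <- r) F i).
Proof.
move=> F_long; rewrite big_seq; apply: big_ind => //.
  exact: long_paths_comb0.
exact: long_paths_combD.
Qed.

Lemma long_paths_comb_pcat n a p q : valid p -> valid q ->
  (n <= path_length p + path_length q)%N -> long_paths_comb n (a *: (iota p * iota q)).
Proof.
move=> vp vq pq_long; case: iota_basis => _ _ /(_ p q vp vq) ->.
case pq: (pcat t h p q) => [r|]; last by rewrite scaler0; apply: long_paths_comb0.
have [vr lr] := pcat_valid vp vq pq.
by exists [:: (r, a)]; rewrite /= ?vr ?lr ?pq_long // /path_comb big_seq1.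
Qed.

Lemma long_paths_combM m n x y :
  long_paths_comb m x -> long_paths_comb n y -> long_paths_comb (m + n) (x * y).
Proof.
move=> [s vs [ls ->]] [s' vs' [ls' ->]].
rewrite /path_comb mulr_sumr; apply: long_paths_comb_sum => u' u's'.
rewrite mulr_suml; apply: long_paths_comb_sum => u us.
rewrite -scalerAl -scalerAr scalerA; apply: long_paths_comb_pcat.
- by apply: (allP vs); apply: map_f.
- by apply: (allP vs'); apply: map_f.
by apply: leq_add; [apply: (allP ls) | apply: (allP ls')].
Qed.

Lemma long_paths_comb_arrow e : long_paths_comb 1 (iota (arrow_path V e)).
Proof. by exists [:: (arrow_path V e, 1)]; rewrite //= /path_comb big_seq1 scale1r. Qed.

Lemma inR2_long_paths_comb x : inR2 iota x -> long_paths_comb 2 x.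
Proof.
have inR_long y : inR iota y -> long_paths_comb 1 y.
  move=> [s ->]; apply: long_paths_comb_sum => u _.
  rewrite -[1%N]/(0 + 1 + 0)%N; apply: long_paths_combM; last exact: long_paths_comb_any.
  by apply: long_paths_combM; [apply: long_paths_comb_any | apply: long_paths_comb_arrow].
move=> [s [Rs ->]]; apply: long_paths_comb_sum => u us.
by have [? ?] := Rs u us; apply: (@long_paths_combM 1 1); apply: inR_long.
Qed.

Lemma path_comb_eq0_coef s : all valid (map fst s) -> path_comb s = 0 ->
  forall p, \sum_(u <- s | u.1 == p) u.2 = 0.
Proof.
move=> vs s0 p; pose ps := undup (map fst s).
pose s' := [seq (q, \sum_(u <- s | u.1 == q) u.2) | q <- ps].
have s'_fst : map fst s' = ps by rewrite -map_comp map_id.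
have s'_comb : path_comb s' = path_comb s.
  rewrite /path_comb big_map /=.
  under eq_bigr => q _ do rewrite scaler_suml.
  rewrite (exchange_big_dep xpredT) //=; apply: eq_big_seq => u us.
  rewrite (eq_bigl (pred1 u.1)) => [|q]; last by rewrite /= eq_sym.
  by rewrite -big_filter filter_pred1_uniq ?undup_uniq ?big_seq1 ?mem_undup ?map_f.
have s'_coef0 : all (fun u => u.2 == 0) s'.
  case: iota_basis => + _ _; apply; first by rewrite s'_fst undup_uniq.
    by rewrite s'_fst; apply/allP => q; rewrite mem_undup => /(allP vs).
  by rewrite -/(path_comb s') s'_comb.
have [pin|pnin] := boolP (p \in ps).
  by apply/eqP; apply: (allP s'_coef0 (p, _)); apply: map_f.
rewrite big1_seq // => u /andP[/eqP up us].
by move: pnin; rewrite mem_undup -up map_f.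
Qed.

Lemma arrow_notin_R2 e : ~ inR2 iota (iota (arrow_path V e)).
Proof.
move=> /inR2_long_paths_comb [s vs [ls e_comb]].
pose s2 := (arrow_path V e, 1) :: [seq (u.1, - u.2) | u <- s].
have vs2 : all valid (map fst s2) by rewrite /= -map_comp.
have s2_comb : path_comb s2 = 0.
  rewrite /path_comb big_cons big_map /= scale1r.
  under eq_bigr => u _ do rewrite scaleNr.
  by rewrite sumrN -/(path_comb s) -e_comb subrr.
have := path_comb_eq0_coef vs2 s2_comb (arrow_path V e).
rewrite big_cons eqxx big_map /= big1_seq ?addr0 => [/eqP|u]; first by rewrite oner_eq0.
by case/andP=> /eqP u_e us; move: (allP ls u us); rewrite u_e.
Qed.

Lemma iota_cons e e' s : valid (inr (e :: e' :: s)) ->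
  iota (inr (e :: e' :: s)) = iota (arrow_path V e) * iota (inr (e' :: s)).
Proof.
by move=> /= /andP[he hp]; case: iota_basis => _ _ ->; rewrite //= he.
Qed.
End PathAlgebra.

Section Derivations.
Variables (V E : finType) (t h : E -> V) (k : fieldType).
Variables (A : algType k) (iota : qpath V E -> A) (B : algType k) (pi : A -> B).
Hypothesis iota_basis : is_path_algebra t h iota.

Definition klinear (f : A -> B) := forall (a : k) x y, f (a *: x + y) = a *: f x + f y.

Section KLinear.
Variables (f : A -> B) (f_lin : klinear f).

Lemma klinear0 : f 0 = 0.
Proof.
by move: (f_lin 1 0 0); rewrite !scale1r !addr0 => /eqP; rewrite eq_sym -subr_eq0 addrK => /eqP.
Qed.

Lemma klinearD x y : f (x + y) = f x + f y.
Proof. by rewrite -[x in LHS]scale1r f_lin scale1r. Qed.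

Lemma klinearZ a x : f (a *: x) = a *: f x.
Proof. by rewrite -[a *: x]addr0 f_lin klinear0 addr0. Qed.

Lemma klinear_path_comb s : f (path_comb iota s) = \sum_(u <- s) u.2 *: f (iota u.1).
Proof.
rewrite /path_comb (big_morph f klinearD klinear0).
by apply: eq_bigr => u _; rewrite klinearZ.
Qed.
End KLinear.

Lemma derivation_ext (D1 D2 : A -> B) :
  differential_operator pi D1 -> differential_operator pi D2 ->
  (forall v, D1 (iota (triv_path E v)) = D2 (iota (triv_path E v))) ->
  (forall e, D1 (iota (arrow_path V e)) = D2 (iota (arrow_path V e))) ->
  D1 =1 D2.
Proof.
move=> [lin1 leibniz1] [lin2 leibniz2] D12_triv D12_arrow x.
case: iota_basis => _ /(_ x) [s vs ->] _.
rewrite !klinear_path_comb //; apply: eq_big_seq => u us; congr (_ *: _).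
have : valid_path t h u.1 by apply: (allP vs); apply: map_f.
case: u.1 => [v _|[|e l]] //; first exact: D12_triv.
elim: l e => [|e' l IH] e vp; first exact: D12_arrow.
rewrite (iota_cons iota_basis) // leibniz1 leibniz2 D12_arrow IH //.
by case/andP: vp.
Qed.
End Derivations.

Section ArrowDerivations.
Variables (V E : finType) (t h : E -> V) (k : fieldType).
Variables (A : algType k) (iota : qpath V E -> A) (B : algType k) (pi : A -> B).
Variable D : E -> A -> B.
Hypothesis iota_basis : is_path_algebra t h iota.
Hypothesis pi_quotient : is_quotient_map pi.
Hypothesis ker_pi_R2 : forall x, pi x = 0 -> inR2 iota x.
Hypothesis D_arrows : is_Dp iota pi D.

Local Notation arrow e := (iota (arrow_path V e)).
Local Notation vertex v := (iota (triv_path E v)).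

Definition DE_comb (c : E -> k) (x : A) : B := \sum_e c e *: D e x.

Lemma pi_arrow_neq0 e : pi (arrow e) != 0.
Proof. by apply/eqP => /ker_pi_R2; apply: (arrow_notin_R2 iota_basis). Qed.

Lemma DE_comb_derivation c : differential_operator pi (DE_comb c).
Proof.
split=> [a x y|x y].
  rewrite scaler_sumr -big_split; apply: eq_bigr => e _.
  have [[lin _] _] := D_arrows e.
  by rewrite lin scalerDr !scalerA mulrC.
rewrite mulr_suml mulr_sumr -big_split; apply: eq_bigr => e _.
have [[_ leibniz] _] := D_arrows e.
by rewrite leibniz scalerDr scalerAl scalerAr.
Qed.

Lemma DE_comb_arrow c e : DE_comb c (arrow e) = c e *: pi (arrow e).
Proof.
rewrite /DE_comb (bigD1 e) //=; have [_ [-> _]] := D_arrows e.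
rewrite big1 ?addr0 // => e' e'e; have [_ [_ [D0 _]]] := D_arrows e'.
by rewrite D0 ?scaler0 // eq_sym.
Qed.

Lemma DE_comb_vertex c v : DE_comb c (vertex v) = 0.
Proof. by rewrite /DE_comb big1 // => e _; have [_ [_ [_ ->]]] := D_arrows e; rewrite scaler0. Qed.

Lemma DE_comb_inj c c' : DE_comb c =1 DE_comb c' -> c =1 c'.
Proof.
move=> cc' e; apply/eqP; rewrite -subr_eq0.
have /eqP := cc' (arrow e); rewrite !DE_comb_arrow -subr_eq0 -scalerBl.
by rewrite scaler_eq0 (negbTE (pi_arrow_neq0 e)) orbF.
Qed.

Lemma Dvert_derivation v : differential_operator pi (Dvert iota pi v).
Proof.
case: pi_quotient => lin mul _ _; split=> [a x y|x y]; rewrite /Dvert.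
  by rewrite lin mulrDr mulrDl -scalerAr -scalerAl opprD addrACA scalerBr.
by rewrite !mul mulrBl mulrBr !mulrA addrA subrK.
Qed.

Lemma Dvert_DE_comb v :
  Dvert iota pi v =1 DE_comb (fun e => (t e == v)%:R - (h e == v)%:R).
Proof.
have [lin mul _ _] := pi_quotient.
case: iota_basis => _ _ iota_mul.
apply: (derivation_ext iota_basis (Dvert_derivation v) (DE_comb_derivation _)).
  move=> w; rewrite DE_comb_vertex /Dvert -!mul !iota_mul //=.
  by case: (eqVneq v w) => [->|_]; rewrite subrr.
move=> e; rewrite DE_comb_arrow /Dvert -!mul !iota_mul //= scalerBl eq_sym.
by congr (_ - _); case: eqP => _; rewrite ?scale1r ?scale0r ?(klinear0 lin).
Qed.
End ArrowDerivations.

Section Darts.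
Variables (V E : finType) (t h : E -> V) (sigma : {perm dart E}).

Local Notation phi := (face_perm sigma).
Local Notation dvert := (dvert t h).

Lemma dflipK : involutive (@dflip E).
Proof. by case=> e b; rewrite /dflip /= negbK. Qed.

Lemma face_perm_inj : injective phi.
Proof. by move=> d d' /perm_inj /(can_inj dflipK). Qed.

Lemma sigma_face_perm d : sigma d = phi (dflip d).
Proof. by rewrite /face_perm dflipK. Qed.

Lemma froot_face_perm d : froot phi (phi d) = froot phi d.
Proof.
by apply/esym/eqP; rewrite (root_connect (fconnect_sym face_perm_inj)) fconnect1.
Qed.

Lemma fconnect_froot r d : froots phi r -> fconnect phi r d = (froot phi d == r).
Proof.
by move=> /eqP r_root; rewrite -(root_connect (fconnect_sym face_perm_inj)) r_root eq_sym.
Qed.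

Lemma froot_in_face_roots d : froot phi d \in face_roots sigma.
Proof. by rewrite mem_enum; apply/roots_root/fconnect_sym/face_perm_inj. Qed.

Hypothesis connected : qconnected t h.
Hypothesis planar : planar_rotation t h sigma.

Lemma qconnected_const (T : Type) (a : V -> T) :
  (forall e, a (t e) = a (h e)) -> forall u v, a u = a v.
Proof.
move=> a_arrow u v; have [_ /(_ u v) /connectP [p pp ->]] := connected.
elim: p u pp => [|w p IH] u //= /andP [/existsP [e uw] pp]; rewrite -(IH w pp).
by case/orP: uw => /andP [/eqP <- /eqP <-].
Qed.

Lemma dart_flip_sigma_ind (Q : dart E -> Prop) :
  (forall d, Q d -> Q (dflip d)) -> (forall d, Q d -> Q (sigma d)) ->
  forall d d', Q d -> Q d'.
Proof.
move=> Q_flip Q_sigma.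
have Q_vertex d d' : dvert d = dvert d' -> Q d -> Q d'.
  case: planar => _ sigma_trans _ /sigma_trans /iter_findex <-.
  by elim: findex => //= m IH Qd; apply/Q_sigma/IH.
have Q_step u v : qadj t h u v ->
    (exists2 d, dvert d = u & Q d) -> exists2 d, dvert d = v & Q d.
  case/existsP=> e /orP[] /andP[/eqP <- /eqP <-] [d ud Qd].
    by exists (e, false) => //; apply: (Q_flip (e, true)); apply: Q_vertex Qd.
  by exists (e, true) => //; apply: (Q_flip (e, false)); apply: Q_vertex Qd.
move=> d d' Qd; have [_ /(_ (dvert d) (dvert d')) /connectP [p pp d'_last]] := connected.
suff [d'' d''_d'] : exists2 d'', dvert d'' = last (dvert d) p & Q d''.
  by apply: Q_vertex; rewrite d'_last.
clear d'_last.
have : exists2 d'', dvert d'' = dvert d & Q d'' by exists d.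
elim: p (dvert d) pp => [|w p IH] u //= /andP[uw pp] Qu.
exact: IH pp (Q_step _ _ uw Qu).
Qed.
End Darts.

Section FaceOperators.
Variables (V E : finType) (t h : E -> V) (sigma : {perm dart E}).
Variables (k : fieldType) (A B : algType k) (D : E -> A -> B).

Local Notation phi := (face_perm sigma).

Lemma Dface_DE_comb r : Dface D sigma r =1
  DE_comb D (fun e => (fconnect phi r (e, true))%:R - (fconnect phi r (e, false))%:R).
Proof.
move=> x; rewrite /Dface big_uniq ?orbit_uniq //.
rewrite (eq_bigl (fconnect phi r)) => [|d]; last by rewrite fconnect_orbit.
rewrite big_mkcond /=.
have -> : \sum_(d : dart E) (if fconnect phi r d then dsign k d *: D d.1 x else 0) =
    \sum_e \sum_b (if fconnect phi r (e, b) then dsign k (e, b) *: D e x else 0).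
  by rewrite pair_big; apply: eq_bigr => -[e b].
apply: eq_bigr => e _.
rewrite big_bool /= /dsign /=.
case: (fconnect phi r (e, true)); case: (fconnect phi r (e, false)) => /=.
all: by rewrite scalerBl ?scaleN1r ?scale1r ?scale0r ?addr0 ?add0r ?subr0 ?sub0r ?oppr0.
Qed.

Lemma sum_face_roots_fconnect (b : dart E -> k) d :
  \sum_(r <- face_roots sigma) b r * (fconnect phi r d)%:R = b (froot phi d).
Proof.
have root_d : froots phi (froot phi d).
  exact/roots_root/fconnect_sym/face_perm_inj.
rewrite /face_roots big_enum /= (bigD1 (froot phi d)) //=.
rewrite fconnect_froot // eqxx mulr1 big1 ?addr0 // => r /andP [rr ne].
by rewrite fconnect_froot // eq_sym (negbTE ne) mulr0.
Qed.

Lemma sum_Dface (b : dart E -> k) x :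
  \sum_(r <- face_roots sigma) b r *: Dface D sigma r x =
  DE_comb D (fun e => b (froot phi (e, true)) - b (froot phi (e, false))) x.
Proof.
under eq_bigr => r _ do rewrite Dface_DE_comb /DE_comb scaler_sumr.
rewrite exchange_big /=; apply: eq_bigr => e _.
rewrite -!sum_face_roots_fconnect -sumrB scaler_suml; apply: eq_bigr => r _.
by rewrite scalerA mulrBr.
Qed.
End FaceOperators.

Section Span.
Variables (k : fieldType) (X : Type) (M : lmodType k).

Lemma sum_fam_nth_map (T : eqType) (s : seq T) (G : T -> X -> M) (c : nat -> k) x :
  uniq s -> \sum_(i < size (map G s)) c i *: fam_nth (map G s) i x =
            \sum_(p <- s) c (index p s) *: G p x.
Proof.
case: s => [|p0 s] s_uniq; first by rewrite big_nil big_ord0.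
rewrite size_map (big_nth p0) big_mkord; apply: eq_bigr => i _.
by rewrite /fam_nth (nth_map p0) // index_uniq.
Qed.

Lemma in_span_map (T : Type) (s : seq T) (G : T -> X -> M) (g : X -> M) (c : T -> k) :
  (forall x, g x = \sum_(p <- s) c p *: G p x) -> in_span (map G s) g.
Proof.
case: s => [|p0 s] g_comb.
  by exists (fun _ => 0) => x; rewrite g_comb big_nil big_ord0.
exists (fun i => c (nth p0 (p0 :: s) i)) => x.
rewrite g_comb (big_nth p0) big_mkord size_map; apply: eq_bigr => i _.
by rewrite /fam_nth (nth_map p0).
Qed.

Lemma size_mask_le (T : Type) (m : bitseq) (s : seq T) : (size (mask m s) <= size s)%N.
Proof.
elim: s m => [|x s IH] [|[] m] //=; first exact: IH.
exact: leq_trans (IH m) (leqnSn _).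
Qed.

Lemma mask_size_eq (T : Type) (m : bitseq) (s : seq T) :
  size (mask m s) = size s -> mask m s = s.
Proof.
elim: s m => [|x s IH] [|[] m] //= => [[/IH ->] //|].
by move=> sz; have := size_mask_le m s; rewrite sz ltnn.
Qed.

Lemma span_dim_relations_const (fs : seq (X -> M)) : (0 < size fs)%N ->
  (forall c : nat -> k, (forall x, \sum_(i < size fs) c i *: fam_nth fs i x = 0) <->
     (forall i j, (i < size fs)%N -> (j < size fs)%N -> c i = c j)) ->
  span_dim fs (size fs - 1).
Proof.
case: fs => [//|f0 fs] _ rel_const; split.
  exists (false :: nseq (size fs) true); rewrite /= mask_true // subn1; split => //.
  move=> c rel i ilt; pose c' i := if i is i'.+1 then c i' else 0.
  have rel' x : \sum_(i < size (f0 :: fs)) c' i *: fam_nth (f0 :: fs) i x = 0.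
    by rewrite big_ord_recl /= scale0r add0r -[RHS](rel x).
  exact: (proj1 (rel_const c') rel' i.+1 0).
move=> m indep; rewrite subn1 /= -ltnS ltn_neqAle size_mask_le andbT.
apply/negP => /eqP /mask_size_eq mask_fs; move: indep; rewrite mask_fs => indep.
have /eqP := indep (fun _ => 1) (proj2 (rel_const (fun _ => 1)) (fun _ _ _ _ => erefl)) 0 isT.
by rewrite oner_eq0.
Qed.
End Span.

Section Main.
Variables (V E : finType) (t h : E -> V) (sigma : {perm dart E}).
Variables (k : fieldType) (A : algType k) (iota : qpath V E -> A).
Variables (B : algType k) (pi : A -> B) (D : E -> A -> B).
Hypothesis connected : qconnected t h.
Hypothesis planar : planar_rotation t h sigma.
Hypothesis iota_basis : is_path_algebra t h iota.
Hypothesis pi_quotient : is_quotient_map pi.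
Hypothesis ker_pi_R2 : forall x, pi x = 0 -> inR2 iota x.
Hypothesis D_arrows : is_Dp iota pi D.

Local Notation phi := (face_perm sigma).
Local Notation rs := (face_roots sigma).
Local Notation DV := (DV_family iota pi).
Local Notation DP := (DP_family D sigma).
Local Notation vindex v := (index v (enum V)).

Definition face_index (d : dart E) : 'I_(size rs) :=
  Ordinal (etrans (index_mem _ _) (froot_in_face_roots sigma d)).

Lemma face_index_face_perm d : face_index (phi d) = face_index d.
Proof. by apply: val_inj; rewrite /= froot_face_perm. Qed.

Lemma face_index_nth r0 (i : 'I_(size rs)) : face_index (nth r0 rs i) = i.
Proof.
apply: val_inj => /=; have := mem_nth r0 (ltn_ord i).
by rewrite {1}mem_enum => /eqP ->; rewrite index_uniq ?enum_uniq.
Qed.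

Lemma DE_comb_eq0 c : (forall x, DE_comb D c x = 0) -> forall e, c e = 0.
Proof.
move=> c0; apply: (DE_comb_inj iota_basis ker_pi_R2 D_arrows) => x.
by rewrite c0 /DE_comb big1 // => e _; rewrite scale0r.
Qed.

Lemma DV_comb (c : nat -> k) x : \sum_(i < size DV) c i *: fam_nth DV i x =
  DE_comb D (fun e => c (vindex (t e)) - c (vindex (h e))) x.
Proof.
have pick w : \sum_(v in V) c (vindex v) * (w == v)%:R = c (vindex w).
  rewrite (bigD1 w) //= eqxx mulr1 big1 ?addr0 // => v /negbTE.
  by rewrite eq_sym => ->; rewrite mulr0.
rewrite sum_fam_nth_map ?enum_uniq // big_enum /=.
under eq_bigr => v _ do rewrite (Dvert_DE_comb iota_basis pi_quotient D_arrows) scaler_sumr.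
rewrite exchange_big /=; apply: eq_bigr => e _.
under eq_bigr => v _ do rewrite scalerA mulrBr.
by rewrite -scaler_suml sumrB !pick.
Qed.

Lemma DV_relations_const (c : nat -> k) :
  (forall x, \sum_(i < size DV) c i *: fam_nth DV i x = 0) <->
  (forall i j, (i < size DV)%N -> (j < size DV)%N -> c i = c j).
Proof.
split=> [rel|c_const x].
  have c_arrow e : c (vindex (t e)) = c (vindex (h e)).
    apply: subr0_eq; move: e; apply: DE_comb_eq0 => x.
    by rewrite -DV_comb rel.
  have [v0 _] : exists v0 : V, true by case: connected => /card_gt0P [v _] _; exists v.
  move=> i j; rewrite size_map => ilt jlt.
  have := qconnected_const connected (a := fun v => c (vindex v)) c_arrow
    (nth v0 (enum V) i) (nth v0 (enum V) j).
  by rewrite !index_uniq ?enum_uniq.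
rewrite DV_comb /DE_comb big1 // => e _.
by rewrite (c_const _ (vindex (h e))) ?subrr ?scale0r // size_map index_mem mem_enum.
Qed.

Lemma dim_DV : span_dim DV (#|V| - 1).
Proof.
rewrite cardE -(size_map (Dvert iota pi)).
apply: span_dim_relations_const; last exact: DV_relations_const.
by rewrite size_map -cardE; case: connected.
Qed.

Section Arrows.
Hypothesis arrows : #|E| != 0%N.

Lemma DP_comb (c : nat -> k) x : \sum_(i < size DP) c i *: fam_nth DP i x =
  DE_comb D (fun e => c (face_index (e, true)) - c (face_index (e, false))) x.
Proof.
rewrite /DP_family (negbTE arrows) sum_fam_nth_map ?enum_uniq //.
exact: (sum_Dface sigma D (fun r => c (index r rs))).
Qed.

Lemma DP_relations_const (c : nat -> k) :
  (forall x, \sum_(i < size DP) c i *: fam_nth DP i x = 0) <->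
  (forall i j, (i < size DP)%N -> (j < size DP)%N -> c i = c j).
Proof.
split=> [rel|c_const x].
  have c_flip e : c (face_index (e, true)) = c (face_index (e, false)).
    apply: subr0_eq; move: e; apply: DE_comb_eq0 => x.
    by rewrite -DP_comb rel.
  have c_dflip d : c (face_index (dflip d)) = c (face_index d).
    by case: d => e [] //=; rewrite c_flip.
  have c_darts d d' : c (face_index d) = c (face_index d').
    apply: (dart_flip_sigma_ind connected planar
      (Q := fun d' => c (face_index d) = c (face_index d'))) => // {}d' ->.
      by rewrite c_dflip.
    by rewrite sigma_face_perm face_index_face_perm c_dflip.
  move=> i j; rewrite /DP_family (negbTE arrows) size_map => ilt jlt.
  have [r0 _] : exists r0 : dart E, true by move: ilt; case: rs => // r0; exists r0.
  rewrite -[i]/(val (Ordinal ilt)) -[j]/(val (Ordinal jlt)).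
  rewrite -(face_index_nth r0 (Ordinal ilt)) -(face_index_nth r0 (Ordinal jlt)); exact: c_darts.
rewrite DP_comb /DE_comb big1 // => e _.
rewrite (c_const _ (face_index (e, false))) ?subrr ?scale0r //.
all: by rewrite /DP_family (negbTE arrows) size_map.
Qed.
End Arrows.

Lemma dim_DP : span_dim DP (nfaces sigma - 1).
Proof.
rewrite /nfaces; have [E0|arrows] := eqVneq #|E| 0%N.
  rewrite /DP_family E0; apply: span_dim_relations_const => // c.
  by split=> [_ [|i] [|j] //|_ x]; rewrite big_ord1 /fam_nth /= scaler0.
have -> : size rs = size DP by rewrite /DP_family (negbTE arrows) size_map.
apply: span_dim_relations_const; last exact: DP_relations_const.
rewrite /DP_family (negbTE arrows) size_map.
have /card_gt0P [e _] : (0 < #|E|)%N by rewrite lt0n.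
by have := froot_in_face_roots sigma (e, true); case: rs.
Qed.

Lemma in_span_DE c (g : A -> B) : g =1 DE_comb D c -> in_span (DE_family D) g.
Proof. by move=> g_comb; apply: (in_span_map (c := c)) => x; rewrite g_comb big_enum. Qed.

Lemma DV_DP_sub_DE : span_sub DV (DE_family D) /\ span_sub DP (DE_family D).
Proof.
split=> i ilt.
  have [v0 _] : exists v0 : V, true by case: connected => /card_gt0P [v _] _; exists v.
  rewrite size_map in ilt; apply: in_span_DE => x; rewrite /fam_nth (nth_map v0) //.
  exact: (Dvert_DE_comb iota_basis pi_quotient D_arrows).
rewrite /fam_nth /DP_family; case: ifP => [E0|arrows] in ilt *.
  apply: (@in_span_DE (fun _ => 0)) => x; rewrite /DE_comb big1 => [|e _]; last first.
    by rewrite scale0r.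
  by move: ilt; rewrite /DP_family E0 /= ltnS leqn0 => /eqP ->.
move: ilt; rewrite /DP_family arrows size_map => ilt.
have [r0 _] : exists r0 : dart E, true by move: ilt; case: rs => // r0; exists r0.
by apply: in_span_DE => x; rewrite (nth_map r0) // Dface_DE_comb.
Qed.

Definition dual_weight (i j : 'I_(size rs)) : nat :=
  \sum_d ((face_index d == i) && (face_index (dflip d) == j) : nat).

Lemma dual_weight_sym i j : dual_weight i j = dual_weight j i.
Proof.
rewrite /dual_weight (reindex_inj (can_inj (@dflipK E))) /=.
by apply: eq_bigr => d _; rewrite dflipK andbC.
Qed.

Lemma dual_weight_connected (P : pred 'I_(size rs)) : (exists i, P i) ->
  (forall i j, (0 < dual_weight i j)%N -> P i -> P j) -> forall i, P i.
Proof.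
move=> [i0 Pi0] P_step i.
have [r0 _] : exists r0 : dart E, true.
  by move: (leq_ltn_trans (leq0n _) (ltn_ord i0)); case: rs => // r0; exists r0.
have P_dflip d : P (face_index d) -> P (face_index (dflip d)).
  by apply: P_step; rewrite /dual_weight (bigD1 d) //= !eqxx.
have P_darts d d' : P (face_index d) -> P (face_index d').
  apply: (dart_flip_sigma_ind connected planar (Q := fun d => P (face_index d))).
    exact: P_dflip.
  by move=> {}d /P_dflip; rewrite sigma_face_perm face_index_face_perm.
by rewrite -(face_index_nth r0 i); apply: (P_darts (nth r0 rs i0)); rewrite face_index_nth.
Qed.

Lemma dual_laplacian_eq0 (a : V -> k) (b : 'I_(size rs) -> k) :
  (forall e, a (t e) - a (h e) = b (face_index (e, true)) - b (face_index (e, false))) ->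
  forall j, laplacian dual_weight b j = 0.
(* Rewritten as a sum over the darts of face [j], the Laplacian of [b] at [j]
   becomes the sum of the increments of [a] around the boundary of [j],
   which telescopes to [0]. *)
Proof.
move=> ab j; rewrite /laplacian.
under eq_bigr => i _ do rewrite natr_sum mulr_suml.
rewrite exchange_big /=.
have pick d : \sum_i ((face_index d == i) && (face_index (dflip d) == j))%:R * (b j - b i)
    = (face_index (dflip d) == j)%:R * (b j - b (face_index d)).
  case: (face_index (dflip d) == j); last first.
    by rewrite mul0r big1 // => i _; rewrite andbF mul0r.
  rewrite mul1r (bigD1 (face_index d)) //= eqxx mul1r big1 ?addr0 // => i /negbTE ne.
  by rewrite eq_sym ne mul0r.
under eq_bigr => d _ do rewrite pick.
rewrite (reindex_inj (can_inj (@dflipK E))) /=.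
have flow d : (face_index (dflip (dflip d)) == j)%:R * (b j - b (face_index (dflip d))) =
    (face_index d == j)%:R * (a (dvert t h d) - a (dvert t h (phi d))).
  rewrite dflipK; case: eqP => [<-|_]; last by rewrite !mul0r.
  have [sigma_dvert _ _] := planar.
  rewrite !mul1r /face_perm sigma_dvert; case: d => e [] /=; rewrite /dflip /dvert /=.
    by rewrite ab.
  by rewrite -[LHS]opprB -ab opprB.
under eq_bigr => d _ do rewrite flow mulrBr.
rewrite sumrB [X in X - _](reindex_inj (@face_perm_inj _ sigma)) /=.
by under [X in X - _]eq_bigr => d _ do rewrite face_index_face_perm; rewrite subrr.
Qed.

Hypothesis char0 : [pchar k] =i pred0.

Lemma DV_DP_meet0 : span_meet_trivial DV DP.
Proof.
move=> g [cV gV] [cP gP] x.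
have [E0|arrows] := eqVneq #|E| 0%N.
  by rewrite gP /DP_family E0 big_ord1 /fam_nth /= scaler0.
pose b (i : 'I_(size rs)) := cP i.
have flow : forall e, cV (vindex (t e)) - cV (vindex (h e)) =
                      b (face_index (e, true)) - b (face_index (e, false)).
  apply: (DE_comb_inj iota_basis ker_pi_R2 D_arrows) => y.
  by rewrite -DV_comb -gV gP DP_comb.
have b_const := laplacian_eq0_const dual_weight_sym dual_weight_connected char0
  (dual_laplacian_eq0 (a := fun v => cV (vindex v)) flow).
rewrite gP DP_comb // /DE_comb big1 // => e _.
by rewrite -/(b _) -/(b _) (b_const (face_index (e, true)) (face_index (e, false))) subrr scale0r.
Qed.
End Main.

Theorem lemma3p6
  (V E : finType) (t h : E -> V) (sigma : {perm dart E})
  (k : fieldType) (A : algType k) (iota : qpath V E -> A)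
  (B : algType k) (pi : A -> B) (D : E -> A -> B) :
  qconnected t h ->
  planar_rotation t h sigma ->
  [pchar k] =i pred0 ->
  is_path_algebra t h iota ->
  is_quotient_map pi ->
  (forall x, pi x = 0 -> inR2 iota x) ->
  is_Dp iota pi D ->
  [/\ span_dim (DV_family iota pi) (#|V| - 1),
      span_dim (DP_family D sigma) (nfaces sigma - 1),
      span_sub (DV_family iota pi) (DE_family D) /\ span_sub (DP_family D sigma) (DE_family D)
    & span_meet_trivial (DV_family iota pi) (DP_family D sigma)].
Proof.
move=> connected planar char0 iota_basis pi_quotient ker_pi_R2 D_arrows; split.
- exact: dim_DV connected iota_basis pi_quotient ker_pi_R2 D_arrows.
- exact: dim_DP connected planar iota_basis ker_pi_R2 D_arrows.
- exact (DV_DP_sub_DE sigma connected iota_basis pi_quotient D_arrows).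
exact: DV_DP_meet0 connected planar iota_basis pi_quotient ker_pi_R2 D_arrows char0.
Qed.
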